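(* Let $G$ be a solenoidal Hausdorff topological group. Then every continuous action of $G$ on the Hilbert cube $I^{\aleph_0}=[0,1]^{\mathbb N}$ has a fixed point. In particular every continuous action of $\mathbb R$ on $I^{\aleph_0}$ has a fixed point.
   Context: A topological group $G$ is solenoidal if there exists a continuous homomorphism $f\colon\mathbb R\to G$ whose image is dense in $G$. *)

From Stdlib Require Import Reals.
Open Scope R_scope.

Definition opens (X : Type) := (X -> Prop) -> Prop.

Definition is_topology {X : Type} (O : opens X) : Prop :=
  O (fun _ => True) /\
  (forall U V, O U -> O V -> O (fun x => U x /\ V x)) /\
  (forall (I : Type) (F : I -> X -> Prop),
      (forall i, O (F i)) -> O (fun x => exists i, F i x)).

Definition continuous {X Y : Type} (OX : opens X) (OY : opens Y) (f : X -> Y) : Prop :=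
  forall V, OY V -> OX (fun x => V (f x)).

Definition hausdorff {X : Type} (O : opens X) : Prop :=
  forall x y : X, x <> y ->
    exists U V, O U /\ O V /\ U x /\ V y /\ (forall z, U z -> V z -> False).

Definition prod_opens {X Y : Type} (OX : opens X) (OY : opens Y) : opens (X * Y) :=
  fun W => forall p, W p ->
    exists U V, OX U /\ OY V /\ U (fst p) /\ V (snd p) /\
      (forall a b, U a -> V b -> W (a, b)).

Definition R_opens : opens R :=
  fun U => forall x, U x -> exists eps, eps > 0 /\ (forall y, Rabs (y - x) < eps -> U y).

Definition hilbert_cube : Type := { x : nat -> R | forall n, 0 <= x n <= 1 }.

Definition cube_opens : opens hilbert_cube :=
  fun W => forall x, W x -> exists (N : nat) (eps : R), eps > 0 /\
    (forall y : hilbert_cube,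
       (forall i, (i < N)%nat -> Rabs (proj1_sig y i - proj1_sig x i) < eps) -> W y).

Definition is_group {G : Type} (mul : G -> G -> G) (inv : G -> G) (e : G) : Prop :=
  (forall a b c, mul a (mul b c) = mul (mul a b) c) /\
  (forall a, mul e a = a) /\ (forall a, mul a e = a) /\
  (forall a, mul (inv a) a = e) /\ (forall a, mul a (inv a) = e).

Definition is_topological_group {G : Type} (O : opens G)
  (mul : G -> G -> G) (inv : G -> G) (e : G) : Prop :=
  is_group mul inv e /\ is_topology O /\
  continuous (prod_opens O O) O (fun p => mul (fst p) (snd p)) /\
  continuous O O inv.

Definition solenoidal {G : Type} (O : opens G) (mul : G -> G -> G) : Prop :=
  exists f : R -> G,
    (forall s t, f (s + t) = mul (f s) (f t)) /\
    continuous R_opens O f /\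
    (forall U, O U -> (exists g, U g) -> exists t, U (f t)).

Definition continuous_action {G X : Type} (OG : opens G) (OX : opens X)
  (mul : G -> G -> G) (e : G) (act : G -> X -> X) : Prop :=
  (forall x, act e x = x) /\
  (forall g h x, act (mul g h) x = act g (act h x)) /\
  continuous (prod_opens OG OX) OX (fun p => act (fst p) (snd p)).

Definition has_fixed_point {G X : Type} (act : G -> X -> X) : Prop :=
  exists x, forall g, act g x = x.

From Stdlib Require Import Reals Lra Lia ZArith.
From Stdlib Require Import Classical ClassicalEpsilon FunctionalExtensionality ProofIrrelevance.
From mathcomp Require Import all_boot.
Set Implicit Arguments. Unset Strict Implicit.
Close Scope R_scope.
Open Scope nat_scope.

(* The key case is a flow.  The Hilbert cube has the fixed-point property:
   label the grid points y of mesh 1/(m+1) in the first m+1 coordinates by the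
   first coordinate that is positive and not increased by the map; Sperner's lemma, proved by the
   door-parity argument on Kuhn simplices, yields a small grid cube carrying all
   labels, and a cluster point of these cubes as m grows is a fixed point.  Each
   time-(1/2)^m map of a flow thus has a fixed point; a cluster point of these
   is fixed by all dyadic times, hence by all times by density and continuity.
   A solenoidal group acts through the dense image of R, so the fixed point of
   the induced flow is fixed by the whole group. *)

(** * Sperner's lemma on Kuhn triangulations *)

Definition propb (P : Prop) : bool := if excluded_middle_informative P then true else false.
Lemma propbP P : reflect P (propb P).
Proof. by rewrite /propb; case: excluded_middle_informative => H; [left|right]. Qed.

Lemma uniq_map_inj_in (T1 T2 : eqType) (f : T1 -> T2) (s : seq T1) :
  uniq (map f s) -> {in s &, injective f}.
Proof.
elim: s => [|a s IH] //= /andP [Ha Hu] x y.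
rewrite !inE => /orP[/eqP->|Hx] /orP[/eqP->|Hy] Hf //.
- by move: Ha; rewrite Hf (map_f f Hy).
- by move: Ha; rewrite -Hf (map_f f Hx).
- exact: IH.
Qed.

Lemma inj_in_of_cover (f : nat -> nat) (A : seq nat) p : uniq A -> size A <= p ->
  (forall c, c < p -> c \in map f A) -> {in A &, injective f}.
Proof.
move=> uA sA cov; apply: uniq_map_inj_in; apply: (leq_size_uniq (iota_uniq 0 p)).
- by move=> c; rewrite mem_iota add0n => /andP[_ ]; exact: cov.
- by rewrite size_map size_iota.
Qed.

Lemma even_card_of_involution (T : finType) (P : T -> Prop) (tau : T -> T) :
 (forall x, P x -> P (tau x) /\ tau (tau x) = x /\ tau x <> x) ->
 ~~ odd #|[set x | propb (P x)]|.
Proof.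
move=> H.
suff: forall m (A : {set T}), #|A| = m ->
  (forall x, x \in A -> tau x \in A /\ tau (tau x) = x /\ tau x <> x) -> ~~ odd m.
  apply=> // x; rewrite inE => /propbP Px; have [H1 [H2 H3]] := H x Px.
  by rewrite inE; split=> //; apply/propbP.
move=> m; elim/ltn_ind: m => m IH A cA HA.
case: (set_0Vmem A) => [A0 | [x xA]].
  by rewrite -cA A0 cards0.
have [tA [ttx tx]] := HA x xA.
set B := A :\ x :\ tau x.
have txA : tau x \in A :\ x by rewrite !inE; apply/andP; split=> //; apply/eqP.
have cB : m = (#|B|).+2.
  by rewrite -cA (cardsD1 x A) xA (cardsD1 (tau x) (A :\ x)) txA.
rewrite cB /= negbK; apply: (IH #|B| _ B) => //; first by rewrite cB.
move=> y; rewrite !inE => /andP[ytx /andP[yx yA]].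
have [tyA [tty ty]] := HA y yA.
split; last by [].
rewrite tyA andbT; apply/andP; split; apply/eqP => E.
- by move/eqP: yx; apply; rewrite -tty E ttx.
- by move/eqP: ytx; apply; rewrite -tty E.
Qed.

Section Sperner.
Local Opaque fun_of_fin.
Variables (n K : nat) (lab : (nat -> nat) -> nat).
Local Notation N := n.+1.
Hypothesis lab_le : forall x, lab x <= N.
Hypothesis lab_succ_support : forall x i, x i = 0 -> lab x <> i.+1.
Hypothesis lab_top : forall x i, i < N -> x i = K.+1 -> lab x <> 0.

(* A Kuhn simplex of the grid {0..K+1}^N: base point s.1 and vertex order s.2;
   vertex t raises by 1 the coordinates i with s.2 i < t. *)
Definition ksimplex := ({ffun 'I_N -> 'I_K.+1} * {ffun 'I_N -> 'I_N})%type.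
Definition kvertex (s : ksimplex) (t : nat) : nat -> nat :=
  fun i => if i < N then (s.1 (inord i) : nat) + (s.2 (inord i) < t) else 0.

Definition klabel s t := lab (kvertex s t).

Lemma kvertexE s t (i : 'I_N) : kvertex s t i = s.1 i + (s.2 i < t).
Proof. by rewrite /kvertex ltn_ord inord_val. Qed.

(* s lies in the face {x | x_i = 0 for i >= M} and never raises those coordinates. *)
Definition in_face (M : nat) (s : ksimplex) :=
  (forall i : 'I_N, M <= i -> (s.1 i : nat) = 0 /\ (s.2 i : nat) = i) /\ injective s.2.

Definition fully_labelled M s := forall c, c <= M -> exists t, t <= M /\ klabel s t = c.

(* A marked simplex (s, j) stands for the facet of s opposite its vertex j; it
   is a door when that facet carries exactly the labels 0..M-1. *)
Definition marked_simplex := (ksimplex * 'I_N.+1)%type.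
Definition door M (x : marked_simplex) := in_face M x.1 /\ x.2 <= M /\
  (forall t, t <= M -> t <> x.2 -> klabel x.1 t < M) /\
  (forall c, c < M -> exists t, [/\ t <= M, t <> x.2 & klabel x.1 t = c]).

(* The facet lies on the boundary of the face: on a hyperplane x_i = K+1 (facet
   without vertex 0) or x_i = 0 (facet without vertex M). *)
Definition on_boundary M (x : marked_simplex) :=
  ((x.2 : nat) = 0 /\ exists i, (x.1.2 i : nat) = 0 /\ (x.1.1 i : nat) = K) \/
  ((x.2 : nat) = M /\ exists i, (x.1.2 i : nat) = M.-1 /\ (x.1.1 i : nat) = 0).

Lemma in_face_perm_surj M s : in_face M s -> forall t : 'I_N, exists i, s.2 i = t.
Proof. by case=> _ inj t; have [g _ gK] := injF_bij inj; exists (g t). Qed.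

Lemma kvertex_frozen M s t i : in_face M s -> M <= i -> t <= M -> kvertex s t i = 0.
Proof.
case=> H _ Mi tM; rewrite /kvertex; case: ifP => // iN.
have := H (inord i); rewrite inordK // => /(_ Mi) [-> ->] /=.
by rewrite ltnNge (leq_trans tM Mi).
Qed.

Lemma label_le_of_support x M : (forall i, M <= i -> x i = 0) -> lab x <= M.
Proof.
move=> Hx; rewrite leqNgt; apply/negP => lt.
have := lab_le x; case E: (lab x) lt => [|c] // lt _.
by apply: (lab_succ_support (Hx c lt)).
Qed.

Lemma klabel_le M s t : in_face M s -> t <= M -> klabel s t <= M.
Proof. by move=> l tM; apply: label_le_of_support => i Mi; apply: kvertex_frozen l Mi tM. Qed.

Definition rotdown (M : nat) (x : 'I_N) : 'I_N :=
  if (x : nat) == 0 then inord M.-1 else if x < M then inord x.-1 else x.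
Definition rotup (M : nat) (x : 'I_N) : 'I_N :=
  if (x : nat) == M.-1 then inord 0 else if x < M then inord x.+1 else x.
Definition swapv (j : nat) (x : 'I_N) : 'I_N :=
  if (x : nat) == j.-1 then inord j else if (x : nat) == j then inord j.-1 else x.

Lemma rotupK M : 0 < M <= N -> cancel (rotdown M) (rotup M).
Proof.
case/andP=> M0 MN x; apply: ord_inj.
have MN' : M.-1 < N by rewrite prednK.
rewrite /rotdown; case: (eqVneq (x : nat) 0) => [x0|x0].
  by rewrite /rotup (inordK MN') eqxx /= inordK // x0.
case: ifP => xM.
  have xM1 : x.-1 < M.-1 by rewrite -ltnS !prednK // lt0n.
  rewrite /rotup inordK ?(ltn_trans xM1) //; last by rewrite ltn_predL.
  case: eqP => [E|_]; first by move: xM1; rewrite E ltnn.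
  by rewrite inordK prednK ?lt0n // (leq_ltn_trans _ (ltn_ord x)) // leq_pred.
have xM1 : M.-1 < x by rewrite ltnNge -ltnS prednK // xM.
by rewrite /rotup (gtn_eqF xM1) xM.
Qed.

Lemma rotdownK M : 0 < M <= N -> cancel (rotup M) (rotdown M).
Proof.
case/andP=> M0 MN x; apply: ord_inj.
have MN' : M.-1 < N by rewrite prednK.
rewrite /rotup; case: (eqVneq (x : nat) M.-1) => [xM|xM].
  by rewrite /rotdown inordK // eqxx /= inordK // xM.
case: ifP => xlt.
  have xlt' : x < M.-1 by rewrite ltn_neqAle xM -ltnS prednK.
  have xN : x.+1 < N by rewrite (leq_ltn_trans xlt').
  by rewrite /rotdown inordK //= ifT ?inordK // -(prednK M0) ltnS.
rewrite /rotdown xlt; case: eqP => // x0.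
by move: xlt; rewrite x0 M0.
Qed.

Lemma swapvK j : 0 < j < N -> involutive (swapv j).
Proof.
case/andP=> j0 jN x; apply: val_inj; rewrite /swapv.
have jN' : j.-1 < N by rewrite (leq_ltn_trans (leq_pred _)).
have ne : (j == j.-1) = false by apply/negbTE; rewrite neq_ltn ltn_predL j0 orbT.
case: (eqVneq (x : nat) j.-1) => [E|E].
  by rewrite inordK // ne eqxx /= inordK.
case: (eqVneq (x : nat) j) => [E2|E2].
  by rewrite inordK // eqxx /= inordK.
by rewrite (negbTE E) (negbTE E2).
Qed.

(* Kuhn pivots: vertex t of pivot_down M s is vertex t+1 of s (t < M),
   pivot_up M is its inverse, and pivot_swap j moves only vertex j. *)
Definition pivot_down M (s : ksimplex) : ksimplex :=
  ([ffun i => inord (s.1 i + ((s.2 i : nat) == 0))], [ffun i => rotdown M (s.2 i)]).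

Definition pivot_up M (s : ksimplex) : ksimplex :=
  ([ffun i => inord (s.1 i - ((s.2 i : nat) == M.-1))], [ffun i => rotup M (s.2 i)]).

Definition pivot_swap j (s : ksimplex) : ksimplex := (s.1, [ffun i => swapv j (s.2 i)]).

Lemma rotdownE M x : 0 < M <= N ->
  (rotdown M x : nat) = if (x:nat) == 0 then M.-1 else if x < M then x.-1 else x.
Proof.
case/andP=> M0 MN; rewrite /rotdown; case: eqP => _; first by rewrite inordK // prednK.
by case: ifP => // xM; rewrite inordK // (leq_ltn_trans (leq_pred _)).
Qed.

Lemma rotupE M x : 0 < M <= N ->
  (rotup M x : nat) = if (x:nat) == M.-1 then 0 else if x < M then x.+1 else x.
Proof.
case/andP=> M0 MN; rewrite /rotup; case: eqP => E; first by rewrite inordK.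
case: ifP => // xM; rewrite inordK // (leq_trans _ MN) //.
by rewrite ltn_neqAle xM andbT; apply/eqP => E2; apply: E; rewrite -E2.
Qed.

Lemma swapvE j x : 0 < j < N ->
  (swapv j x : nat) = if (x:nat) == j.-1 then j else if (x:nat) == j then j.-1 else x.
Proof.
case/andP=> j0 jN; rewrite /swapv; case: eqP => _; first by rewrite inordK.
by case: eqP => _ //; rewrite inordK // (leq_ltn_trans (leq_pred _)).
Qed.

Lemma ltn_pred_ltnS a t : 0 < a -> (a.-1 < t) = (a < t.+1).
Proof. by move=> a0; rewrite -ltnS prednK. Qed.

Lemma kvertex_pivot_down M s t : in_face M s -> 0 < M <= N ->
  (forall i, (s.2 i : nat) = 0 -> s.1 i < K) -> t < M ->
  kvertex (pivot_down M s) t = kvertex s t.+1.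
Proof.
move=> l MM hv tM; have /andP[M0 MN] := MM; apply: functional_extensionality => i.
rewrite /kvertex; case: ifP => // iN; set o := inord i; rewrite !ffunE /= rotdownE //.
case: (eqVneq (s.2 o : nat) 0) => [a0|a0].
  rewrite inordK; last by rewrite addn1 ltnS hv.
  by rewrite a0 ltn_pred_ltnS // ltnNge tM addn0 ltn0Sn.
rewrite (_ : s.1 o + false = s.1 o); last exact: addn0.
rewrite inord_val.
case: ifP => aM; first by rewrite ltn_pred_ltnS // lt0n.
have Ma : M <= s.2 o by rewrite leqNgt aM.
rewrite ltnNge (leq_trans (ltnW tM) Ma) ltnNge (leq_trans tM Ma).
reflexivity.
Qed.

Lemma kvertex_pivot_up M s t : in_face M s -> 0 < M <= N ->
  (forall i, (s.2 i : nat) = M.-1 -> 0 < s.1 i) -> t < M ->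
  kvertex (pivot_up M s) t.+1 = kvertex s t.
Proof.
move=> l MM hv tM; have /andP[M0 MN] := MM; apply: functional_extensionality => i.
rewrite /kvertex; case: ifP => // iN; set o := inord i; rewrite !ffunE /= rotupE //.
case: (eqVneq (s.2 o : nat) M.-1) => [a0|a0].
  rewrite a0 ltn0Sn (ltn_pred_ltnS t M0) ltnNge tM.
  rewrite inordK; last exact: (leq_ltn_trans (leq_subr _ _) (ltn_ord _)).
  rewrite subnK; last exact: hv.
  by rewrite (addn0 (s.1 o)).
rewrite (subn0 (s.1 o)) inord_val.
case: ifP => aM; first by rewrite ltnS.
have Ma : M <= s.2 o by rewrite leqNgt aM.
rewrite ltnNge (leq_trans tM Ma) ltnNge (leq_trans (ltnW tM) Ma).
reflexivity.
Qed.

Lemma kvertex_pivot_swap j s t : 0 < j < N -> t != j -> kvertex (pivot_swap j s) t = kvertex s t.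
Proof.
move=> jj tj; have /andP[j0 jN] := jj; apply: functional_extensionality => i.
rewrite /kvertex; case: ifP => // iN; set o := inord i; rewrite !ffunE /=.
congr (_ + _); rewrite swapvE //.
case: (eqVneq (s.2 o : nat) j.-1) => [a|a].
  rewrite a (ltn_pred_ltnS t j0); case: (ltngtP j t) => [jt|tj'|E]; last by rewrite E eqxx in tj.
    by rewrite ltnW.
  by rewrite ltnS leqNgt tj'.
case: (eqVneq (s.2 o : nat) j) => [b|b]; last reflexivity.
rewrite b (ltn_pred_ltnS t j0); case: (ltngtP j t) => [jt|tj'|E]; last by rewrite E eqxx in tj.
  by rewrite ltnW.
by rewrite ltnS leqNgt tj'.
Qed.

Lemma rotdown_eq M x : 0 < M <= N -> ((rotdown M x : nat) == M.-1) = ((x : nat) == 0).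
Proof.
move=> MM; have /andP[M0 MN] := MM; rewrite rotdownE //.
case: (eqVneq (x : nat) 0) => [x0|x0]; first by rewrite eqxx.
case: ifP => xM.
  apply/negbTE; rewrite neq_ltn; apply/orP; left.
  by rewrite -ltnS prednK ?lt0n // prednK.
apply/negbTE; rewrite neq_ltn; apply/orP; right.
by rewrite ltnNge -ltnS prednK // xM.
Qed.

Lemma rotup_eq M x : 0 < M <= N -> ((rotup M x : nat) == 0) = ((x : nat) == M.-1).
Proof.
move=> MM; have /andP[M0 MN] := MM; rewrite rotupE //.
case: (eqVneq (x : nat) M.-1) => [x0|x0]; first by rewrite eqxx.
case: ifP => xM; first by [].
have Mx : M <= x by rewrite leqNgt xM.
by apply/negbTE; rewrite -lt0n (leq_trans M0 Mx).
Qed.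

Lemma in_face_pivot_down M s : in_face M s -> 0 < M <= N -> in_face M (pivot_down M s).
Proof.
move=> [H inj] MM; have /andP[M0 MN] := MM; split.
  move=> i Mi; have [e1 e2] := H i Mi; rewrite !ffunE /= rotdownE // e1 e2.
  have i0 : ((i : nat) == 0) = false by apply/negbTE; rewrite -lt0n (leq_trans M0 Mi).
  rewrite i0 ltnNge Mi /=; split; last reflexivity.
  by rewrite (_ : 0 + false = 0) // inordK.
move=> i i'; rewrite !ffunE => E; apply: inj; exact: (can_inj (rotupK MM) E).
Qed.

Lemma in_face_pivot_up M s : in_face M s -> 0 < M <= N -> in_face M (pivot_up M s).
Proof.
move=> [H inj] MM; have /andP[M0 MN] := MM; split.
  move=> i Mi; have [e1 e2] := H i Mi; rewrite !ffunE /= rotupE // e1 e2.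
  have i0 : ((i : nat) == M.-1) = false.
    have h : M.-1 < M by rewrite ltn_predL.
    by apply/negbTE; rewrite neq_ltn (leq_trans h Mi) orbT.
  rewrite i0 ltnNge Mi /=; split; last reflexivity.
  by rewrite (_ : 0 - false = 0) // inordK.
move=> i i'; rewrite !ffunE => E; apply: inj; exact: (can_inj (rotdownK MM) E).
Qed.

Lemma in_face_pivot_swap M j (s : ksimplex) :
  in_face M s -> 0 < j < M -> M <= N -> in_face M (pivot_swap j s).
Proof.
move=> [H inj] /andP[j0 jM] MN; have jj : 0 < j < N by rewrite j0 (leq_trans jM MN).
split.
  move=> i Mi; have [e1 e2] := H i Mi; rewrite !ffunE /= swapvE // e2; split; first exact: e1.
  have -> : ((i : nat) == j.-1) = false.
    by apply/negbTE; rewrite neq_ltn (leq_ltn_trans (leq_pred j) (leq_trans jM Mi)) orbT.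
  have -> : ((i : nat) == j) = false.
    by apply/negbTE; rewrite neq_ltn (leq_trans jM Mi) orbT.
  reflexivity.
move=> i i'; rewrite !ffunE => E; apply: inj.
exact: (can_inj (swapvK jj) E).
Qed.

Lemma pivot_downK M (s : ksimplex) : 0 < M <= N ->
  (forall i, (s.2 i : nat) = 0 -> s.1 i < K) -> pivot_up M (pivot_down M s) = s.
Proof.
move=> MM hv; case: s hv => [v r] hv /=.
congr (_, _); apply/ffunP => i; rewrite !ffunE /=.
  apply: ord_inj; rewrite rotdown_eq //.
  case: (eqVneq (r i : nat) 0) => [a0|a0].
    have h : v i < K by exact: hv.
    rewrite (inordK (_ : v i + true < K.+1)); last by rewrite addn1 ltnS.
    by rewrite addnK inord_val.
  by rewrite (addn0 (v i)) inord_val (subn0 (v i)) inord_val.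
exact: rotupK.
Qed.

Lemma pivot_upK M (s : ksimplex) : 0 < M <= N ->
  (forall i, (s.2 i : nat) = M.-1 -> 0 < s.1 i) -> pivot_down M (pivot_up M s) = s.
Proof.
move=> MM hv; case: s hv => [v r] hv /=.
congr (_, _); apply/ffunP => i; rewrite !ffunE /=.
  apply: ord_inj; rewrite rotup_eq //.
  case: (eqVneq (r i : nat) M.-1) => [a0|a0].
    have h : 0 < v i by exact: hv.
    rewrite (inordK (_ : v i - true < K.+1)); last first.
      exact: (leq_ltn_trans (leq_subr _ _) (ltn_ord _)).
    by rewrite subnK // inord_val.
  by rewrite (subn0 (v i)) inord_val (addn0 (v i)) inord_val.
exact: rotdownK.
Qed.

Lemma pivot_swapK j (s : ksimplex) : 0 < j < N -> pivot_swap j (pivot_swap j s) = s.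
Proof.
move=> jj; case: s => [v r]; rewrite /pivot_swap /=; congr (_, _).
by apply/ffunP => i; rewrite !ffunE swapvK.
Qed.

(* The other simplex of the face through the same facet (Kuhn pivoting). *)
Definition adjacent_simplex M (x : marked_simplex) : marked_simplex :=
  if (x.2 : nat) == 0 then (pivot_down M x.1, inord M)
  else if (x.2 : nat) == M then (pivot_up M x.1, inord 0)
  else (pivot_swap x.2 x.1, x.2).

Definition interior_door M (x : marked_simplex) := door M x /\ ~ on_boundary M x.

Lemma interior_door_pivot_down M s (j : 'I_N.+1) : 0 < M <= N -> (j : nat) = 0 ->
  interior_door M (s, j) ->
  interior_door M (pivot_down M s, inord M) /\ pivot_up M (pivot_down M s) = s.
Proof.
move=> MM j0 [[l [jM [dl dc]]] nb]; have /andP[M0 MN] := MM.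
have MN1 : M < N.+1 by rewrite ltnS.
have hv : forall i, (s.2 i : nat) = 0 -> s.1 i < K.
  move=> i ri; rewrite ltn_neqAle -ltnS ltn_ord andbT; apply/eqP => E.
  by apply: nb; left; split=> //; exists i.
split; last exact: pivot_downK.
split.
- split; first exact: in_face_pivot_down.
  rewrite /= inordK //; split; first exact: leqnn.
  split.
    move=> t tM tnM; have tM' : t < M by rewrite ltn_neqAle tM andbT; apply/eqP.
    rewrite /klabel kvertex_pivot_down //; apply: dl => //; by rewrite j0.
  move=> c cM; have [t [tM tj lt]] := dc c cM.
  have t0 : 0 < t by rewrite lt0n; apply/eqP => E; apply: tj; rewrite E j0.
  exists t.-1; split.
  + exact: (leq_trans (leq_pred t) tM).
  + by move=> E; move: tM; rewrite -(prednK t0) E ltnn.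
  + rewrite /klabel kvertex_pivot_down //; first by rewrite prednK.
    by rewrite -ltnS prednK.
- rewrite /on_boundary /= inordK //; case=> [[E _]|[_ [i [ri vi]]]]; first by move: M0; rewrite E.
  move: vi; rewrite ffunE.
  have /eqP := ri; rewrite ffunE rotdown_eq // => /eqP r0.
  by rewrite r0 addn1 inordK // ltnS; apply: hv.
Qed.

Lemma interior_door_pivot_up M s (j : 'I_N.+1) : 0 < M <= N -> (j : nat) = M ->
  interior_door M (s, j) ->
  interior_door M (pivot_up M s, inord 0) /\ pivot_down M (pivot_up M s) = s.
Proof.
move=> MM jm [[l [jM [dl dc]]] nb]; have /andP[M0 MN] := MM.
have hv : forall i, (s.2 i : nat) = M.-1 -> 0 < s.1 i.
  move=> i ri; rewrite lt0n; apply/eqP => E.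
  by apply: nb; right; split=> //; exists i.
split; last exact: pivot_upK.
split.
- split; first exact: in_face_pivot_up.
  rewrite /= inordK //; split; first exact: leq0n.
  split.
    move=> t tM tn0; have t0 : 0 < t by rewrite lt0n; apply/eqP.
    have tM' : t.-1 < M by rewrite -ltnS prednK.
    rewrite /klabel -(prednK t0) kvertex_pivot_up //; apply: dl.
      exact: (leq_trans (leq_pred t) tM).
    by rewrite jm => E; move: tM'; rewrite E ltnn.
  move=> c cM; have [t [tM tj lt]] := dc c cM.
  have tM' : t < M by rewrite ltn_neqAle tM andbT; apply/eqP; rewrite -jm.
  exists t.+1; split => //.
  by rewrite /klabel kvertex_pivot_up.
- rewrite /on_boundary /= inordK //; case=> [[_ [i [ri vi]]]|[E _]]; last by move: M0; rewrite -E.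
  move: vi; rewrite ffunE.
  have /eqP := ri; rewrite ffunE rotup_eq // => /eqP r0.
  rewrite r0 eqxx inordK; last exact: (leq_ltn_trans (leq_subr _ _) (ltn_ord _)).
  move=> E; have E' : s.1 i - 1 = K by exact: E.
  have h := hv i r0; move: (ltn_ord (s.1 i)); rewrite -(subnK h) E' addn1 ltnn.
  by [].
Qed.

Lemma interior_door_pivot_swap M s (j : 'I_N.+1) : M <= N -> 0 < j < M ->
  interior_door M (s, j) ->
  interior_door M (pivot_swap j s, j) /\ pivot_swap j s <> s.
Proof.
move=> MN /andP[j0 jlt] [[l [jM [dl dc]]] nb].
have jj : 0 < j < N by rewrite j0 (leq_trans jlt MN).
have jj' : 0 < j < M by rewrite j0 jlt.
split.
- split.
  + split; first exact: in_face_pivot_swap.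
    split; first exact: jM.
    split.
      move=> t tM tj; rewrite /klabel kvertex_pivot_swap //; last by apply/eqP.
      exact: dl.
    move=> c cM; have [t [tM tj lt]] := dc c cM; exists t; split => //.
    by rewrite /klabel kvertex_pivot_swap //; apply/eqP.
  + rewrite /on_boundary /=; case=> [[E _]|[E _]]; first by move: j0; rewrite E.
    by move: jlt; rewrite E ltnn.
- move=> E.
  have jN' : j.-1 < N by rewrite (leq_ltn_trans (leq_pred _)) // (leq_trans jlt MN).
  have [i ri] := in_face_perm_surj l (inord j.-1).
  have := congr1 (fun s' : ksimplex => (s'.2 i : nat)) E.
  rewrite /= ffunE ri swapvE // inordK // eqxx => /eqP.
  by apply/negP; rewrite neq_ltn ltn_predL j0 orbT.
Qed.

Lemma adjacent_simplex_invol M : 0 < M <= N -> forall x, interior_door M x ->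
  interior_door M (adjacent_simplex M x) /\
  adjacent_simplex M (adjacent_simplex M x) = x /\ adjacent_simplex M x <> x.
Proof.
move=> MM [s j] d; have /andP[M0 MN] := MM.
have MN1 : M < N.+1 by rewrite ltnS.
have jM : j <= M by case: d => [[_ [jM _]] _].
rewrite /adjacent_simplex /=.
have M0' : (M == 0) = false by apply/negbTE; rewrite -lt0n.
case: (eqVneq (j : nat) 0) => [j0|j0].
  have [d' K'] := interior_door_pivot_down MM j0 d.
  rewrite /= inordK // M0' eqxx K'; split=> //; split.
    by congr (_, _); apply: ord_inj; rewrite inordK // j0.
  by case=> _ /(congr1 (@nat_of_ord _)); rewrite inordK // j0 => E; move: M0; rewrite E.
case: (eqVneq (j : nat) M) => [jm|jm].
  have [d' K'] := interior_door_pivot_up MM jm d.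
  rewrite /= inordK // eqxx K'; split=> //; split.
    by congr (_, _); apply: ord_inj; rewrite inordK // jm.
  by case=> _ /(congr1 (@nat_of_ord _)); rewrite inordK // jm => E; move: M0; rewrite -E.
have jj : 0 < j < M by rewrite lt0n j0 ltn_neqAle jm jM.
have [d' ne] := interior_door_pivot_swap MN jj d.
have jN : 0 < j < N by rewrite (proj1 (andP jj)) (leq_trans (proj2 (andP jj))).
rewrite /= (negbTE j0) (negbTE jm) pivot_swapK //.
by split=> //; split=> // [[E]].
Qed.

Lemma door_label_inj M x : door M x -> forall t1 t2, t1 <= M -> t2 <= M ->
  t1 <> x.2 -> t2 <> x.2 -> klabel x.1 t1 = klabel x.1 t2 -> t1 = t2.
Proof.
case=> l [jM [dl dc]] t1 t2 t1M t2M t1j t2j E.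
set A := rem (x.2 : nat) (iota 0 M.+1).
have uA : uniq A by rewrite rem_uniq // iota_uniq.
have inA : forall t, t <= M -> t <> x.2 -> t \in A.
  move=> t tM tj; rewrite /A (mem_rem_uniq _ (iota_uniq 0 M.+1)) inE mem_iota add0n ltnS tM andbT.
  by rewrite andbT; apply/eqP.
have sA : size A <= M.
  by rewrite /A size_rem ?size_iota // mem_iota add0n ltnS jM.
have cov : forall c, c < M -> c \in map (klabel x.1) A.
  move=> c cM; have [t [tM tj lt]] := dc c cM; rewrite -lt; apply: map_f; exact: inA.
exact: (inj_in_of_cover uA sA cov (inA _ t1M t1j) (inA _ t2M t2j) E).
Qed.

Lemma fully_labelled_label_inj M s : fully_labelled M s -> forall t1 t2, t1 <= M -> t2 <= M ->
  klabel s t1 = klabel s t2 -> t1 = t2.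
Proof.
move=> fl t1 t2 t1M t2M E.
have inA : forall t, t <= M -> t \in iota 0 M.+1 by move=> t tM; rewrite mem_iota add0n ltnS.
have cov : forall c, c < M.+1 -> c \in map (klabel s) (iota 0 M.+1).
  move=> c cM; have [t [tM lt]] := fl c cM; rewrite -lt; apply: map_f; exact: inA.
have size_iota_le := eq_leq (size_iota 0 M.+1).
exact: (inj_in_of_cover (iota_uniq 0 M.+1) size_iota_le cov (inA _ t1M) (inA _ t2M) E).
Qed.

Definition twin_door M (x : marked_simplex) : marked_simplex :=
  (x.1, odflt x.2 [pick t : 'I_N.+1 |
    propb ((t : nat) <= M /\ (t : nat) <> x.2 /\ klabel x.1 t = klabel x.1 x.2)]).

Lemma door_missing_label_lt M s (j : 'I_N.+1) :
  door M (s, j) -> ~ fully_labelled M s -> klabel s j < M.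
Proof.
case=> l [jM [dl dc]] nfl.
rewrite ltn_neqAle (klabel_le l jM) andbT; apply/eqP => E; apply: nfl => c' c'M.
case: (ltngtP c' M) => [lt|gt|eq]; last by exists j; rewrite E eq.
  by have [t [tM _ lt']] := dc c' lt; exists t.
by move: c'M; rewrite leqNgt gt.
Qed.

Lemma door_twin M s (j j' : 'I_N.+1) : door M (s, j) -> klabel s j < M ->
  j' <= M -> (j' : nat) <> j -> klabel s j' = klabel s j -> door M (s, j').
Proof.
case=> l [jM [dl dc]] cM j'M j'j lt'.
split; first exact: l. split; first exact: j'M. split.
  move=> u uM uj'; case: (eqVneq u j) => [->|uj]; first exact: cM.
  by apply: dl => // E; move: uj; rewrite E eqxx.
move=> c' c'M; have [u [uM uj lu]] := dc c' c'M.
case: (eqVneq u j') => [uj'|uj'].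
  exists j; split => //; first by move=> E; apply: j'j; rewrite E.
  by rewrite -lu uj' lt'.
by exists u; split => //; apply/eqP.
Qed.

Lemma twin_door_invol M : 0 < M <= N -> forall x, door M x /\ ~ fully_labelled M x.1 ->
  (door M (twin_door M x) /\ ~ fully_labelled M (twin_door M x).1) /\
  twin_door M (twin_door M x) = x /\ twin_door M x <> x.
Proof.
move=> /andP[M0 MN] [s j] [d nfl]; rewrite /twin_door /=.
have cM := door_missing_label_lt d nfl.
have [t0 [t0M t0j lt0]] := d.2.2.2 _ cM.
have t0N : t0 < N.+1 by rewrite ltnS (leq_trans t0M MN).
case: pickP => [t' /propbP [t'M [t'j lt']] | none]; last first.
  by have := none (inord t0); move/propbP; case; rewrite inordK.
have d' := door_twin d cM t'M t'j lt'.
split; last split.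
- by split.
- congr (_, _); case: pickP => [u /propbP [uM [uj' lu]] | none]; last first.
    exfalso; have := none j; move/propbP; case; split => //; first exact: d.2.1.
    by split; [move=> E; apply: t'j; rewrite E | rewrite lt'].
  apply: ord_inj; case: (eqVneq (u : nat) j) => [//|uj].
  exfalso; apply: uj'; apply: (door_label_inj d uM t'M) => //=; exact/eqP.
- by case=> E; apply: t'j; rewrite E.
Qed.

Lemma fully_labelled_unique_door M s : 0 < M -> M <= N -> in_face M s -> fully_labelled M s ->
  exists j : 'I_N.+1, door M (s, j) /\ forall j', door M (s, j') -> j' = j.
Proof.
move=> M0 MN l fl.
have [t [tM lt]] := fl M (leqnn M).
have tN : t < N.+1 by rewrite ltnS (leq_trans tM MN).
have dj : door M (s, inord t).
  split; first exact: l. rewrite /= inordK //; split; first exact: tM. split.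
    move=> u uM ut; rewrite ltn_neqAle (klabel_le l uM) andbT; apply/eqP => E.
    by apply: ut; apply: (fully_labelled_label_inj fl uM tM); rewrite E lt.
  move=> c cM; have [u [uM lu]] := fl c (ltnW cM); exists u; split => //.
  by move=> E; move: cM; rewrite -lu E lt ltnn.
exists (inord t); split; first exact: dj.
move=> j' [_ [j'M [dl _]]]; apply: ord_inj; rewrite inordK //.
case: (eqVneq (j' : nat) t) => [//|ne].
have tj : t <> (s, j').2 by move=> E; move: ne; rewrite /= -E eqxx.
by have := dl t tM tj; rewrite lt ltnn.
Qed.

Lemma door_not_on_upper_boundary m s (j : 'I_N.+1) : door m.+1 (s, j) -> (j : nat) = 0 ->
  ~ exists i, (s.2 i : nat) = 0 /\ (s.1 i : nat) = K.
Proof.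
case=> [_ [_ [_ dc]]] j0 [i [ri vi]].
have [t [tM tj lt]] := dc 0 (ltn0Sn m).
have t0 : 0 < t by rewrite lt0n; apply/eqP => E; apply: tj; rewrite E j0.
apply: (lab_top (i := i)) lt; first exact: ltn_ord.
by rewrite kvertexE ri vi t0 addn1.
Qed.

Lemma lower_boundary_door_fully_labelled m s (j : 'I_N.+1) :
  door m.+1 (s, j) -> (j : nat) = m.+1 ->
  (exists i, (s.2 i : nat) = m /\ (s.1 i : nat) = 0) -> in_face m s /\ fully_labelled m s.
Proof.
case=> [l [jM [dl dc]]] jM' [i [ri vi]].
have iM : i < m.+1.
  rewrite ltnNge; apply/negP => Mi; have [_ e2] := l.1 i Mi; move: ri; rewrite e2 /= => E.
  by move: Mi; rewrite E ltnn.
have im : (i : nat) = m.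
  apply/eqP; rewrite eqn_leq -ltnS iM /= leqNgt; apply/negP => lt.
  have [t [tM tj lt']] := dc i.+1 lt.
  have tm : t <= m by rewrite -ltnS ltn_neqAle tM andbT; apply/eqP; rewrite -jM'.
  apply: (lab_succ_support (i := i)) lt'; rewrite kvertexE ri vi /= ltnNge tm; reflexivity.
split.
  split; last exact: l.2.
  move=> i' mi'; case: (eqVneq (i' : nat) m) => [e|ne].
    have -> : i' = i by apply: ord_inj; rewrite e im.
    by rewrite ri vi im.
  by apply: l.1; rewrite ltn_neqAle eq_sym ne mi'.
move=> c cm; have [t [tM tj lt]] := dc c cm; exists t; split => //.
by rewrite -ltnS ltn_neqAle tM andbT; apply/eqP; rewrite -jM'.
Qed.

Lemma boundary_door_of_fully_labelled m s (j : 'I_N.+1) : m < N -> (j : nat) = m.+1 ->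
  in_face m s -> fully_labelled m s -> door m.+1 (s, j) /\ on_boundary m.+1 (s, j).
Proof.
move=> mN jM l fl; split.
  split.
    split; last exact: l.2.
    by move=> i Mi; apply: l.1; apply: ltnW.
  split; first by rewrite /= jM.
  split.
    move=> t tM tj; have tm : t <= m by rewrite -ltnS ltn_neqAle tM andbT; apply/eqP; rewrite -jM.
    exact: (leq_ltn_trans (klabel_le l tm)).
  move=> c cM; have [t [tm lt]] := fl c cM; exists t; split => //.
    exact: leqW.
  by rewrite /= jM => E; move: tm; rewrite E ltnn.
right; split; first exact: jM.
have mle : m <= (inord m : 'I_N) by rewrite inordK.
exists (inord m); have [e1 e2] := l.1 (inord m) mle.
by rewrite /= e1 e2 inordK.
Qed.

Lemma boundary_door_iff m x : m < N -> (door m.+1 x /\ on_boundary m.+1 x) <->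
  ((x.2 : nat) = m.+1 /\ in_face m x.1 /\ fully_labelled m x.1).
Proof.
move=> mN; case: x => s j /=; split; last first.
  by case=> jM [l fl]; apply: boundary_door_of_fully_labelled.
case=> d [[j0 top] | [jM bot]]; first by case: (door_not_on_upper_boundary d j0).
by split=> //; exact: (lower_boundary_door_fully_labelled d jM bot).
Qed.

Definition fully_labelled_set m := [set s : ksimplex | propb (in_face m s /\ fully_labelled m s)].

Lemma set_propbI (U : finType) (P Q : U -> Prop) :
  [set x | propb (P x /\ Q x)] = [set x | propb (P x)] :&: [set x | propb (Q x)].
Proof.
apply/setP => x; rewrite !inE; apply/propbP/andP.
  by case=> p q; split; apply/propbP.
by case=> /propbP p /propbP q.
Qed.

Lemma set_propbD (U : finType) (P Q : U -> Prop) :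
  [set x | propb (P x /\ ~ Q x)] = [set x | propb (P x)] :\: [set x | propb (Q x)].
Proof.
apply/setP => x; rewrite !inE; apply/propbP/andP.
  by case=> p q; split; [apply/propbP => /q | apply/propbP].
by case=> /propbP q /propbP p.
Qed.

Lemma card_fully_labelled0 : #|fully_labelled_set 0| = 1.
Proof.
set s0 : ksimplex := ([ffun => ord0], [ffun i => i]).
have l0 : in_face 0 s0.
  split; first by move=> i _; rewrite !ffunE.
  by move=> i i'; rewrite !ffunE.
suff -> : fully_labelled_set 0 = [set s0] by rewrite cards1.
apply/setP => s; rewrite !inE; apply/propbP/eqP.
  case=> [[H _] _]; case: s H => v r H; congr (_, _); apply/ffunP => i;
    have [e1 e2] := H i (leq0n _); apply: ord_inj; rewrite ffunE //.
move=> ->; split; first exact: l0.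
move=> c; rewrite leqn0 => /eqP ->; exists 0; split => //.
have := klabel_le l0 (leqnn 0); rewrite leqn0 => /eqP; exact.
Qed.

Lemma card_boundary_doors m : m < N ->
  #|[set x : marked_simplex | propb (door m.+1 x /\ on_boundary m.+1 x)]| =
  #|fully_labelled_set m|.
Proof.
move=> mN.
rewrite -(@card_imset _ _ (fun s : ksimplex => ((s, inord m.+1) : marked_simplex))
          (fully_labelled_set m)); last first.
  by move=> s1 s2 E; move: (congr1 fst E).
apply: eq_card => x; apply/idP/imsetP.
  rewrite inE => /propbP /(boundary_door_iff x mN) [x2 [l fl]].
  exists x.1; first by rewrite inE; apply/propbP.
  case: x x2 {l fl} => s j /= x2; congr (_, _); apply: ord_inj; rewrite inordK //.
case=> s; rewrite !inE => /propbP [l fl] ->.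
apply/propbP; apply/(boundary_door_iff _ mN) => /=.
by rewrite inordK ?ltnS.
Qed.

Lemma card_fully_labelled_doors m : m < N ->
  #|[set x : marked_simplex | propb (door m.+1 x /\ fully_labelled m.+1 x.1)]| =
  #|fully_labelled_set m.+1|.
Proof.
move=> mN; set DF := [set x | _].
have -> : fully_labelled_set m.+1 = [set x.1 | x in DF].
  apply/setP => s; apply/idP/imsetP.
    rewrite inE => /propbP [l fl].
    have [j [dj _]] := fully_labelled_unique_door (ltn0Sn m) mN l fl.
    by exists (s, j) => //; rewrite inE; apply/propbP.
  case=> x; rewrite inE => /propbP [d fl] ->.
  by rewrite inE; apply/propbP; split => //; exact: d.1.
rewrite card_in_imset //.
move=> [s j] [s' j']; rewrite !inE => /propbP [dx flx] /propbP [dy fly] /= E.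
move: dy fly; rewrite -E => dy fly.
have [j0 [_ U]] := fully_labelled_unique_door (ltn0Sn m) mN dx.1 flx.
by rewrite (U _ dx) (U _ dy).
Qed.

(* Interior doors are paired by adjacent_simplex and doors of simplices that are
   not fully labelled by twin_door; the remaining doors correspond to the fully
   labelled simplices of the m-face and of the (m+1)-face respectively. *)
Lemma odd_fully_labelled_succ m : m < N ->
  odd #|fully_labelled_set m| -> odd #|fully_labelled_set m.+1|.
Proof.
move=> mN om.
have MM : 0 < m.+1 <= N by rewrite ltn0Sn mN.
set D := [set x : marked_simplex | propb (door m.+1 x)].
set B := [set x : marked_simplex | propb (on_boundary m.+1 x)].
set F := [set x : marked_simplex | propb (fully_labelled m.+1 x.1)].
have inner : ~~ odd #|D :\: B|.
  by rewrite -set_propbD; apply: even_card_of_involution; exact: adjacent_simplex_invol.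
have not_full : ~~ odd #|D :\: F|.
  by rewrite -set_propbD; apply: even_card_of_involution; exact: twin_door_invol.
have bd := card_boundary_doors mN; rewrite set_propbI -/D -/B in bd.
have full := card_fully_labelled_doors mN; rewrite set_propbI -/D -/F in full.
have : odd #|D| by rewrite -(cardsID B D) oddD bd om (negbTE inner).
by rewrite -(cardsID F D) oddD full (negbTE not_full) addbF.
Qed.

Lemma odd_fully_labelled m : m <= N -> odd #|fully_labelled_set m|.
Proof.
elim: m => [|m IH] mN; first by rewrite card_fully_labelled0.
by apply: odd_fully_labelled_succ => //; apply: IH; apply: ltnW.
Qed.

Lemma sperner : exists b : nat -> nat, (forall i, b i <= K) /\
  forall c, c <= N -> exists x, lab x = c /\ forall i, x i = b i \/ x i = (b i).+1.
Proof.
have /odd_gt0 /card_gt0P [s] := odd_fully_labelled (leqnn N); rewrite inE => /propbP [l fl].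
exists (kvertex s 0); split.
  move=> i; rewrite /kvertex; case: ifP => // _; rewrite ltn0 addn0; exact: leq_ord.
move=> c cN; have [t [tN lt]] := fl c cN; exists (kvertex s t); split => //.
move=> i; rewrite /kvertex; case: ifP => _; last by left.
rewrite ltn0 addn0; case: (_ < t); [right; exact: addn1 | left; exact: addn0].
Qed.

End Sperner.

Open Scope R_scope.

(** * Brouwer's theorem for the Hilbert cube *)

Definition coord (x : hilbert_cube) (i : nat) : R := proj1_sig x i.

Lemma coord_in x i : 0 <= coord x i <= 1.
Proof. exact: (proj2_sig x i). Qed.

Lemma cube_eq (x y : hilbert_cube) : (forall i, coord x i = coord y i) -> x = y.
Proof.
case: x => f hf; case: y => g hg /= H.
have E : f = g by apply: functional_extensionality.
subst g; congr exist; apply: proof_irrelevance.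
Qed.

Definition clip (r : R) : R := Rmax 0 (Rmin 1 r).
Lemma clip_in r : 0 <= clip r <= 1.
Proof.
rewrite /clip; split; first exact: Rmax_l.
apply: Rmax_lub; [lra | exact: Rmin_l].
Qed.
Lemma clip_id r : 0 <= r <= 1 -> clip r = r.
Proof. move=> [h1 h2]; rewrite /clip Rmin_right // Rmax_right //. Qed.
Lemma clip_lip a b : Rabs (clip a - clip b) <= Rabs (a - b).
Proof.
rewrite /clip /Rmax /Rmin.
repeat (destruct (Rle_dec _ _)); unfold Rabs; repeat (destruct (Rcase_abs _)); lra.
Qed.

Definition cube_of (f : nat -> R) : hilbert_cube :=
  exist (fun x : nat -> R => forall n, 0 <= x n <= 1)
    (fun i => clip (f i)) (fun i => clip_in (f i)).
Lemma coord_cube_of f i : coord (cube_of f) i = clip (f i).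
Proof. by []. Qed.

Definition near (N : nat) (d : R) (x y : hilbert_cube) :=
  forall i, (i < N)%coq_nat -> Rabs (coord x i - coord y i) < d.

Lemma coord_ball_open i c e : cube_opens (fun u => Rabs (coord u i - c) < e).
Proof.
move=> x hx; exists (S i), (e - Rabs (coord x i - c)); split; first lra.
move=> y hy; have := hy i (Nat.lt_succ_diag_r i); rewrite /coord => h.
rewrite /coord in hx.
have := Rabs_triang (proj1_sig y i - proj1_sig x i) (proj1_sig x i - c).
have -> : proj1_sig y i - proj1_sig x i + (proj1_sig x i - c) = proj1_sig y i - c by ring.
lra.
Qed.

Lemma continuous_near g (Hg : continuous cube_opens cube_opens g) q i e : 0 < e ->
  exists N d, 0 < d /\ forall y, near N d y q -> Rabs (coord (g y) i - coord (g q) i) < e.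
Proof.
move=> e0; have := Hg _ (@coord_ball_open i (coord (g q) i) e) q.
rewrite Rminus_diag Rabs_R0 => /(_ e0) [N [d [d0 H]]].
by exists N, d; split => // y hy; apply: H.
Qed.

Lemma near_mono N N' d d' x y : (N <= N')%coq_nat -> d' <= d -> near N' d' x y -> near N d x y.
Proof. move=> NN dd H i iN; have := H i ltac:(lia); lra. Qed.

Lemma displacement_near g (Hg : continuous cube_opens cube_opens g) q i e : 0 < e ->
  exists N d, 0 < d /\ forall y, near N d y q ->
    Rabs ((coord (g y) i - coord y i) - (coord (g q) i - coord q i)) < e.
Proof.
move=> e0; have [N [d [d0 Hc]]] := continuous_near Hg q i (ltac:(lra) : 0 < e / 2).
exists (Nat.max N (S i)), (Rmin d (e / 2)); split; first by apply: Rmin_pos; lra.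
move=> y ny; have := Hc y (near_mono (Nat.le_max_l _ _) (Rmin_l _ _) ny).
have := ny i ltac:(lia); have := Rmin_r d (e / 2).
move=> h1 /Rabs_def2 [h2 h3] /Rabs_def2 [h4 h5]; apply: Rabs_def1; lra.
Qed.

Lemma fixed_of_approx_fixed g (Hg : continuous cube_opens cube_opens g) q :
  (forall i e N d, 0 < e -> 0 < d -> exists y z, near N d y q /\ near N d z q /\
      coord (g y) i <= coord y i + e /\ coord z i - e <= coord (g z) i) -> g q = q.
Proof.
move=> H; apply: cube_eq => i; apply: Rle_antisym; apply: Rle_plus_epsilon => e e0;
  have [N [d [d0 Hd]]] := displacement_near Hg q i (ltac:(lra) : 0 < e / 2);
  have [y [z [ny [nz [hy hz]]]]] := H i (e / 2) N d ltac:(lra) d0.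
- by case/Rabs_def2: (Hd y ny) => h1 h2; lra.
- by case/Rabs_def2: (Hd z nz) => h1 h2; lra.
Qed.

Section Cluster.
Variable p : nat -> hilbert_cube.
Definition box := ((nat -> R) * (nat -> R))%type.
Definition in_box (s : box) (x : hilbert_cube) := forall j, s.1 j <= coord x j <= s.2 j.
Definition often_in (s : box) := forall M, exists m, (M <= m)%coq_nat /\ in_box s (p m).
Definition upd (f : nat -> R) j v := fun k => if Nat.eq_dec k j then v else f k.
Definition lower_half j (s : box) : box := (s.1, upd s.2 j ((s.1 j + s.2 j)/2)).
Definition upper_half j (s : box) : box := (upd s.1 j ((s.1 j + s.2 j)/2), s.2).
Definition halve j s :=
  if excluded_middle_informative (often_in (lower_half j s)) then lower_half j s
  else upper_half j s.

Lemma often_in_halve j s : often_in s -> often_in (halve j s).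
Proof.
rewrite /halve; case: excluded_middle_informative => // nl Hs.
have [M0 HM0] : exists M0, forall m, (M0 <= m)%coq_nat -> ~ in_box (lower_half j s) (p m).
  apply: NNPP => H; apply: nl => M; apply: NNPP => H2; apply: H; exists M => m Mm ib.
  by apply: H2; exists m.
move=> M; have [m [Mm ib]] := Hs (Nat.max M M0); exists m; split; first lia.
have nlb := HM0 m ltac:(lia).
move=> k; rewrite /upper_half /upd /=; destruct (Nat.eq_dec k j) as [->|ne]; last exact: ib k.
split; last exact: (proj2 (ib j)).
apply: Rnot_lt_le => lt; apply: nlb => k'; rewrite /lower_half /upd /=.
destruct (Nat.eq_dec k' j) as [e|ne']; simpl; last exact: ib k'.
subst k'; split; [exact: (proj1 (ib j)) | lra].
Qed.

(* Stage k+1 halves stage k in the coordinates 0..k, each time keeping a half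
   that contains p m for infinitely many m. *)
Fixpoint halve_upto (B : nat) (s : box) : box :=
  match B with 0 => halve 0 s | S B' => halve (S B') (halve_upto B' s) end.
Fixpoint bisection_box (k : nat) : box :=
  match k with 0 => (fun _ => 0, fun _ => 1) | S k' => halve_upto k' (bisection_box k') end.

Lemma often_in_halve_upto B s : often_in s -> often_in (halve_upto B s).
Proof. elim: B => [|B IH] /= H; apply: often_in_halve; [exact: H | exact: IH]. Qed.

Lemma often_in_bisection_box k : often_in (bisection_box k).
Proof.
elim: k => [|k IH] /=; last exact: often_in_halve_upto.
move=> M; exists M; split; first lia.
move=> j /=; exact: coord_in.
Qed.

Definition box_ok (s : box) := forall k, s.1 k <= s.2 k.
Definition box_width (s : box) k := s.2 k - s.1 k.

Lemma halve_ok j s : box_ok s -> box_ok (halve j s) /\ (forall k, s.1 k <= (halve j s).1 k) /\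
  (forall k, (halve j s).2 k <= s.2 k) /\
  (forall k, box_width (halve j s) k = if Nat.eq_dec k j then box_width s k / 2 else box_width s k).
Proof.
move=> ok; rewrite /halve /box_width /box_ok; case: excluded_middle_informative => Hem;
  rewrite /lower_half /upper_half /upd /=; (split; [|split; [|split]]) => k;
  destruct (Nat.eq_dec k j) as [e|ne]; simpl; try subst k; have := ok j; try (have := ok k); lra.
Qed.

Lemma halve_upto_ok B s : box_ok s ->
  box_ok (halve_upto B s) /\ (forall k, s.1 k <= (halve_upto B s).1 k) /\
  (forall k, (halve_upto B s).2 k <= s.2 k) /\
  (forall k, box_width (halve_upto B s) k =
     if Nat.leb k B then box_width s k / 2 else box_width s k).
Proof.
move=> ok; elim: B => [|B [o1 [m1 [m2 w]]]] /=.
  have [o [a [b w]]] := halve_ok 0 ok; split => //; split => //; split => // k.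
  rewrite w; destruct (Nat.eq_dec k 0) as [e|ne]; simpl; first by subst k.
  by case: k ne.
have [o [a [b w']]] := halve_ok (S B) o1; split => //; split.
  move=> k; exact: (Rle_trans _ _ _ (m1 k) (a k)).
split; first by move=> k; exact: (Rle_trans _ _ _ (b k) (m2 k)).
move=> k; rewrite w' w; destruct (Nat.eq_dec k (S B)) as [e|ne]; simpl.
  subst k.
  rewrite (_ : Nat.leb (S B) B = false); last by apply/Nat.leb_gt; lia.
  rewrite (_ : Nat.leb (S B) (S B) = true) //; by apply/Nat.leb_le.
case: (Nat.leb_spec k B) => h1; case: (Nat.leb_spec k (S B)) => h2 //; lia.
Qed.

Lemma bisection_box_ok k :
  box_ok (bisection_box k) /\ forall j, box_width (bisection_box k) j = (/2) ^ (Nat.sub k j).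
Proof.
elim: k => [|k [o w]].
  by split; [move=> j /=; lra | move=> j; rewrite /box_width /=; lra].
change (bisection_box k.+1) with (halve_upto k (bisection_box k)).
have [o' [_ [_ w']]] := halve_upto_ok k o; split => // j; rewrite w' w.
case: (Nat.leb_spec j k) => h.
  have -> : Nat.sub (S k) j = S (Nat.sub k j) by lia.
  by rewrite [in RHS]/= Rmult_comm.
have -> : Nat.sub (S k) j = 0%nat by lia.
have -> : Nat.sub k j = 0%nat by lia.
reflexivity.
Qed.

Lemma bisection_box_mono k k' j : (k <= k')%coq_nat ->
  (bisection_box k).1 j <= (bisection_box k').1 j /\
  (bisection_box k').2 j <= (bisection_box k).2 j.
Proof.
elim: k' / => [|k' le [h1 h2]]; first lra.
have [_ [a [b _]]] := halve_upto_ok k' (proj1 (bisection_box_ok k')).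
by split; [exact: (Rle_trans _ _ _ h1 (a j)) | exact: (Rle_trans _ _ _ (b j) h2)].
Qed.

Lemma bisection_box_lower_le_upper k k' j : (bisection_box k).1 j <= (bisection_box k').2 j.
Proof.
have [a1 b1] := bisection_box_mono j (Nat.le_max_l k k').
have [a2 b2] := bisection_box_mono j (Nat.le_max_r k k').
have := (proj1 (bisection_box_ok (Nat.max k k'))) j; lra.
Qed.

Lemma cluster_point : exists q : hilbert_cube, forall N d M, 0 < d ->
  exists m, (M <= m)%coq_nat /\ near N d (p m) q.
Proof.
pose E j := fun r => exists k, r = (bisection_box k).1 j.
have qex : forall j, {r | is_lub (E j) r}.
  move=> j; apply: completeness.
    exists 1; move=> r [k ->]; exact: (bisection_box_lower_le_upper k 0 j).
  by exists 0, 0%nat.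
pose qf j := proj1_sig (qex j).
have qa : forall j k, (bisection_box k).1 j <= qf j.
  move=> j k; rewrite /qf; case: (qex j) => r [ub _] /=; apply: ub; by exists k.
have qb : forall j k, qf j <= (bisection_box k).2 j.
  move=> j k; rewrite /qf; case: (qex j) => r [_ lub] /=; apply: lub.
  move=> r' [k' ->]; exact: bisection_box_lower_le_upper.
have qin : forall j, 0 <= qf j <= 1 by move=> j; split; [exact: (qa j 0%nat) | exact: (qb j 0%nat)].
exists (exist (fun x : nat -> R => forall n, 0 <= x n <= 1) qf qin).
move=> N d M d0.
have [L HL] : exists L, forall n, (n >= L)%coq_nat -> Rabs ((/2) ^ n) < d.
  apply: pow_lt_1_zero => //; rewrite Rabs_pos_eq; lra.
have [m [Mm ib]] := often_in_bisection_box (Nat.add N L) M.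
exists m; split => // j jN.
have w := (proj2 (bisection_box_ok (Nat.add N L))) j; rewrite /box_width in w.
have hw := HL (Nat.sub (Nat.add N L) j) ltac:(lia).
rewrite Rabs_pos_eq in hw; last by apply: pow_le; lra.
have := ib j; have := qa j (Nat.add N L); have := qb j (Nat.add N L).
rewrite /coord /=; unfold Rabs; repeat (destruct (Rcase_abs _)); lra.
Qed.

End Cluster.

Definition first_label (p : nat -> bool) (N : nat) : nat :=
  match [seq i <- iota 0 N | p i] with [::] => 0%N | i :: _ => i.+1 end.

Lemma first_label_le p N : (first_label p N <= N)%N.
Proof.
rewrite /first_label; case E: [seq i <- iota 0 N | p i] => [|i s] //.
have : i \in [seq i <- iota 0 N | p i] by rewrite E inE eqxx.
by rewrite mem_filter mem_iota add0n => /andP[_ /andP[_ ->]].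
Qed.

Lemma first_labelS p N i : first_label p N = i.+1 -> p i.
Proof.
rewrite /first_label; case E: [seq i <- iota 0 N | p i] => [|i' s] // [<-].
have : i' \in [seq i <- iota 0 N | p i] by rewrite E inE eqxx.
by rewrite mem_filter => /andP[->].
Qed.

Lemma first_label0 p N : first_label p N = 0%N -> forall i, (i < N)%N -> p i = false.
Proof.
rewrite /first_label; case E: [seq i <- iota 0 N | p i] => [|i' s] // _ i iN.
apply/negP => pi; have : i \in [seq i <- iota 0 N | p i].
  by rewrite mem_filter pi mem_iota add0n iN.
by rewrite E.
Qed.

Section Brouwer.
Variable g : hilbert_cube -> hilbert_cube.
Hypothesis g_cont : continuous cube_opens cube_opens g.

Definition grid_point (m : nat) (x : nat -> nat) := cube_of (fun i => INR (x i) / INR (S m)).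
Definition moves_down (y : hilbert_cube) (i : nat) : bool :=
  if Rlt_dec 0 (coord y i) then
    (if Rle_dec (coord (g y) i) (coord y i) then true else false)
  else false.

(* A Sperner labelling of the grid {0..m+1}^(m+1): label i+1 needs a positive
   i-th coordinate, and label 0 is impossible where some coordinate equals 1. *)
Definition grid_label m x := first_label (moves_down (grid_point m x)) (S m).

Lemma INR_succ_pos m : 0 < INR (S m).
Proof. exact: lt_0_INR (Nat.lt_0_succ m). Qed.

Lemma grid_labelS m x i : grid_label m x = i.+1 ->
  coord (g (grid_point m x)) i <= coord (grid_point m x) i.
Proof.
by move/first_labelS; rewrite /moves_down; case: Rlt_dec => // h1; case: Rle_dec.
Qed.

Lemma grid_label0 m x i : grid_label m x = 0%N -> (i < m.+1)%N ->
  coord (grid_point m x) i <= coord (g (grid_point m x)) i.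
Proof.
move=> /first_label0 lab0 /lab0; rewrite /moves_down.
have := coord_in (grid_point m x) i; have := coord_in (g (grid_point m x)) i.
by case: Rlt_dec => h1; [case: Rle_dec => h2 // | ]; intros; lra.
Qed.

Lemma grid_sperner m : exists b : nat -> nat, (forall i, (b i <= m)%N) /\
  forall c, (c <= m.+1)%N -> exists x, grid_label m x = c /\ forall i, x i = b i \/ x i = (b i).+1.
Proof.
apply: sperner.
- move=> x; exact: first_label_le.
- move=> x i xi E; have := first_labelS E.
  rewrite /moves_down coord_cube_of xi /= Rdiv_0_l clip_id; last lra.
  by case: Rlt_dec => // h; lra.
- move=> x i iN xi E; have := first_label0 E iN; rewrite /moves_down coord_cube_of xi.
  have -> : INR m.+1 / INR m.+1 = 1 by field; apply: not_0_INR.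
  rewrite clip_id; last lra.
  case: Rlt_dec => [h0|h]; last lra.
  case: Rle_dec => // h; exfalso; apply: h.
  exact: (proj2 (coord_in _ _)).
Qed.

Lemma grid_point_close m x b : (forall k, x k = b k \/ x k = (b k).+1) ->
  forall k, Rabs (coord (grid_point m x) k - coord (grid_point m b) k) <= / INR (S m).
Proof.
move=> H k; rewrite !coord_cube_of; apply: Rle_trans (clip_lip _ _) _.
have hp := INR_succ_pos m.
have -> : INR (x k) / INR m.+1 - INR (b k) / INR m.+1 = (INR (x k) - INR (b k)) * / INR m.+1.
  by field; lra.
rewrite Rabs_mult (Rabs_pos_eq (/ _)); last by apply: Rlt_le; apply: Rinv_0_lt_compat.
have hi : 0 < / INR m.+1 by apply: Rinv_0_lt_compat.
case: (H k) => ->.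
- rewrite Rminus_diag Rabs_R0; lra.
- rewrite (S_INR (b k)).
  have -> : INR (b k) + 1 - INR (b k) = 1 by ring.
  rewrite Rabs_R1; lra.
Qed.

Lemma brouwer_hilbert_cube : exists x, g x = x.
Proof.
have [bf Hb] : exists bf : nat -> nat -> nat, forall m, (forall i, (bf m i <= m)%N) /\
  forall c, (c <= m.+1)%N ->
    exists x, grid_label m x = c /\ forall i, x i = bf m i \/ x i = (bf m i).+1.
  exists (fun m => proj1_sig (constructive_indefinite_description _ (grid_sperner m))) => m.
  by case: constructive_indefinite_description.
have [q Hq] := cluster_point (fun m => grid_point m (bf m)).
exists q; apply: fixed_of_approx_fixed => // i e N d e0 d0.
have [M0 [hM0 M0p]] := archimed_cor1 (d / 2) ltac:(lra).
have [m [Mm nm]] := Hq N (d / 2) (Nat.max M0 (S i)) ltac:(lra).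
have [_ Hc] := Hb m.
have [xy [ly cy]] := Hc i.+1 (ltac:(apply/leP; lia) : (i.+1 <= m.+1)%N).
have [xz [lz cz]] := Hc 0%N (leq0n _).
have small : / INR (S m) <= / INR M0.
  apply: Rinv_le_contravar; first by apply: lt_0_INR; lia.
  apply: le_INR; lia.
have nr : forall x, (forall k, x k = bf m k \/ x k = (bf m k).+1) -> near N d (grid_point m x) q.
  move=> x hx k kN; have := grid_point_close m hx k; have := nm k kN.
  move: small hM0; rewrite /coord /=; unfold Rabs; repeat (destruct (Rcase_abs _)); lra.
exists (grid_point m xy), (grid_point m xz); do 2 (split; first exact: nr).
have := grid_labelS ly; have := grid_label0 lz (ltac:(apply/ltP; lia) : (i < m.+1)%N).
split; lra.
Qed.

End Brouwer.

(** * Flows and solenoidal groups *)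

Lemma fixed_of_dense_fixed (G : Type) (OG : opens G) (act : G -> hilbert_cube -> hilbert_cube)
    (q : hilbert_cube) (g : G) :
  continuous (prod_opens OG cube_opens) cube_opens (fun p => act (fst p) (snd p)) ->
  (forall U, OG U -> U g -> exists h, U h /\ act h q = q) -> act g q = q.
Proof.
move=> acont dense; apply: cube_eq => i; apply: cond_eq => eps e0.
have [U [V [hU [hV [Ug [Vq rect]]]]]] :=
  acont _ (@coord_ball_open i (coord (act g q) i) eps) (g, q)
    ltac:(rewrite /= Rminus_diag Rabs_R0; lra).
have [h [Uh hq]] := dense U hU Ug.
by have := rect h q Uh Vq; rewrite /= hq Rabs_minus_sym.
Qed.

Lemma dyadic_approx t eps : 0 < eps -> exists (j : nat) (z : Z), Rabs (IZR z * (/2) ^ j - t) < eps.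
Proof.
move=> e0.
have [j Hj] : exists j, Rabs ((/2) ^ j) < eps.
  have [N0 HN0] := pow_lt_1_zero (/2) ltac:(rewrite Rabs_pos_eq; lra) eps e0.
  by exists N0; apply: HN0.
set P := 2 ^ j.
have P0 : 0 < P by apply: pow_lt; lra.
have PI : (/2) ^ j = / P by rewrite /P pow_inv.
have [zb1 zb2] := Zfloor_bound (t * P).
exists j, (Zfloor (t * P)).
have ts : t - IZR (Zfloor (t * P)) * (/2) ^ j = (t * P - IZR (Zfloor (t * P))) * / P.
  by rewrite PI; field; lra.
rewrite Rabs_minus_sym Rabs_pos_eq; last first.
  rewrite ts; apply: Rmult_le_pos; [lra | apply: Rlt_le; exact: Rinv_0_lt_compat].
apply: Rle_lt_trans Hj; rewrite ts Rabs_pos_eq; last by apply: pow_le; lra.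
rewrite PI -[X in _ <= X]Rmult_1_l; apply: Rmult_le_compat_r; last lra.
exact: (Rlt_le _ _ (Rinv_0_lt_compat _ P0)).
Qed.

Section Flow.
Variable act : R -> hilbert_cube -> hilbert_cube.
Hypothesis act_action : continuous_action R_opens cube_opens Rplus 0 act.

Lemma act0 x : act 0 x = x.
Proof. exact: (proj1 act_action). Qed.

Lemma actD s t x : act (s + t) x = act s (act t x).
Proof. exact: (proj1 (proj2 act_action)). Qed.

Lemma act_continuous t : continuous cube_opens cube_opens (act t).
Proof.
move=> V HV x Hx.
have [U [V' [hU [hV' [Ut [Vx rect]]]]]] := proj2 (proj2 act_action) V HV (t, x) Hx.
have [N [eps [e0 H]]] := hV' x Vx.
exists N, eps; split => // y hy; exact: (rect t y Ut (H y hy)).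
Qed.

Lemma fixed_nat_mul s x k : act s x = x -> act (INR k * s) x = x.
Proof.
move=> H; elim: k => [|k IH]; first by rewrite Rmult_0_l act0.
by rewrite S_INR Rmult_plus_distr_r Rmult_1_l actD H IH.
Qed.

Lemma fixed_int_mul s x (z : Z) : act s x = x -> act (IZR z * s) x = x.
Proof.
move=> H; case: (Z_le_gt_dec 0 z) => hz.
  rewrite -(Z2Nat.id z hz) -INR_IZR_INZ; exact: fixed_nat_mul.
have -> : z = (- Z.of_nat (Z.to_nat (- z)))%Z by rewrite Z2Nat.id //; lia.
rewrite opp_IZR -INR_IZR_INZ.
have Hk := fixed_nat_mul (Z.to_nat (- z)) H.
by rewrite Ropp_mult_distr_l_reverse -{1}Hk -actD Rplus_opp_l act0.
Qed.

Lemma fixed_pow_inv2_le j m x : (j <= m)%coq_nat -> act ((/2) ^ m) x = x -> act ((/2) ^ j) x = x.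
Proof.
move=> jm H; have -> : (/2) ^ j = INR (Nat.pow 2 (Nat.sub m j)) * (/2) ^ m.
  rewrite pow_INR (_ : INR 2 = 2) //.
  have -> : m = Nat.add j (Nat.sub m j) by lia.
  rewrite (_ : Nat.sub (Nat.add j (Nat.sub m j)) j = Nat.sub m j); last lia.
  rewrite pow_add Rmult_comm Rmult_assoc -Rpow_mult_distr (_ : / 2 * 2 = 1); last field.
  by rewrite pow1 Rmult_1_r.
exact: fixed_nat_mul.
Qed.

(* Each act ((/2)^m) has a fixed point by Brouwer; a cluster point of these
   fixed points is fixed by every act ((/2)^j), since the fixed set is closed. *)
Lemma common_dyadic_fixed_point : exists q, forall j, act ((/2) ^ j) q = q.
Proof.
have [xf Hxf] : exists xf : nat -> hilbert_cube, forall m, act ((/2) ^ m) (xf m) = xf m.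
  have H m : exists x, act ((/2) ^ m) x = x by apply: brouwer_hilbert_cube; exact: act_continuous.
  exists (fun m => proj1_sig (constructive_indefinite_description _ (H m))) => m.
  by case: constructive_indefinite_description.
have [q Hq] := cluster_point xf.
exists q => j; apply: fixed_of_approx_fixed; first exact: act_continuous.
move=> i e N d e0 d0; have [m [jm nm]] := Hq N d j d0.
exists (xf m), (xf m); do 2 split => //; rewrite (fixed_pow_inv2_le jm (Hxf m)); lra.
Qed.

Lemma flow_has_fixed_point : has_fixed_point act.
Proof.
have [q Hq] := common_dyadic_fixed_point.
exists q => t; apply: (fixed_of_dense_fixed (proj2 (proj2 act_action))) => U hU Ut.
have [eps [e0 HU]] := hU t Ut.
have [j [z approx]] := dyadic_approx t e0.
by exists (IZR z * (/2) ^ j); split; [exact: HU | exact: fixed_int_mul].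
Qed.

End Flow.

Lemma hom_zero (G : Type) (mul : G -> G -> G) (inv : G -> G) (e : G) (f : R -> G) :
  is_group mul inv e -> (forall s t, f (s + t) = mul (f s) (f t)) -> f 0 = e.
Proof.
move=> [gA [g1l [_ [gvl _]]]] fhom.
have idem : f 0 = mul (f 0) (f 0) by rewrite -fhom Rplus_0_r.
have cancel : e = mul (inv (f 0)) (mul (f 0) (f 0)) by rewrite -idem gvl.
by rewrite cancel gA gvl g1l.
Qed.

Lemma continuous_action_comp_hom (G : Type) (mul : G -> G -> G) (e : G) (O : opens G)
    (f : R -> G) (act : G -> hilbert_cube -> hilbert_cube) :
  f 0 = e -> (forall s t, f (s + t) = mul (f s) (f t)) -> continuous R_opens O f ->
  continuous_action O cube_opens mul e act ->
  continuous_action R_opens cube_opens Rplus 0 (fun t x => act (f t) x).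
Proof.
move=> f0 fhom fcont [a0 [aM acont]]; split; first by move=> x; rewrite f0 a0.
split; first by move=> s t x; rewrite fhom aM.
move=> V HV [t x] /= Hx.
have [U [V' [hU [hV' [Ut [Vx rect]]]]]] := acont V HV (f t, x) Hx.
exists (fun s => U (f s)), V'; split; first exact: fcont.
by do 3 split => //; move=> a b Ua Vb; exact: rect.
Qed.

Theorem theorem2p3p12 :
  (forall (G : Type) (mul : G -> G -> G) (inv : G -> G) (e : G) (O : opens G),
     is_topological_group O mul inv e ->
     hausdorff O ->
     solenoidal O mul ->
     forall act : G -> hilbert_cube -> hilbert_cube,
       continuous_action O cube_opens mul e act ->
       has_fixed_point act)
  /\
  (forall act : R -> hilbert_cube -> hilbert_cube,
     continuous_action R_opens cube_opens Rplus 0 act ->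
     has_fixed_point act).
Proof.
split; last exact: flow_has_fixed_point.
move=> G mul inv e O [grp _] _ [f [fhom [fcont fdense]]] act act_action.
have flow := continuous_action_comp_hom (hom_zero grp fhom) fhom fcont act_action.
have [q Hq] := flow_has_fixed_point flow.
exists q => g; apply: (fixed_of_dense_fixed (proj2 (proj2 act_action))) => U hU Ug.
have [t Ut] := fdense U hU (ex_intro _ g Ug).
by exists (f t).
Qed.
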